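(* Let $\mathcal{I}$ be an ideal on $\omega$. If $\mathcal{ED}\le_{\mathrm{K}}\mathcal{I}$, then Player II has a winning strategy in the tallness* game with respect to $\mathcal{I}$.
   Context: Ideals on $\omega$ are assumed to contain all finite sets; $\mathcal{I}^+=\mathcal{P}(\omega)\setminus\mathcal{I}$. $\mathcal{ED}$ is the ideal on $\omega\times\omega$ generated by the vertical lines $\{n\}\times\omega$ and the graphs of functions from $\omega$ to $\omega$. For ideals $\mathcal{J}$ on $X$ and $\mathcal{I}$ on $Y$, $\mathcal{J}\le_{\mathrm{K}}\mathcal{I}$ (Katětov order) means there is a function $f:Y\to X$ with $f^{-1}(J)\in\mathcal{I}$ for every $J\in\mathcal{J}$. Tallness* game with respect to $\mathcal{I}$: at round $k$, Player I plays $n_k\in\omega$ with $n_0<n_1<\cdots$, then Player II plays $i_k\in\{0,1\}$. Player II wins iff either $\{n_k:k\in\omega\}\in\mathcal{I}$, or ($\{n_k:k\in\omega\}\in\mathcal{I}^+$ and $\{n_k:i_k=1\}$ is infinite and belongs to $\mathcal{I}$). *)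

From Stdlib Require Import List Arith.
Import ListNotations.

Definition finite_nat (A : nat -> Prop) : Prop :=
  exists N, forall x, A x -> x < N.

Definition infinite_nat (A : nat -> Prop) : Prop := ~ finite_nat A.

Definition is_ideal (I : (nat -> Prop) -> Prop) : Prop :=
  (forall A, finite_nat A -> I A) /\
  (forall A B, I B -> (forall x, A x -> B x) -> I A) /\
  (forall A B, I A -> I B -> I (fun x => A x \/ B x)) /\
  ~ I (fun _ => True).

(* The ideal ED on omega x omega generated by vertical lines {n} x omega
   and graphs of functions omega -> omega: A is in ED iff A is covered by
   finitely many vertical lines and finitely many graphs. *)
Definition ED (A : nat * nat -> Prop) : Prop :=
  exists (N : nat) (fs : list (nat -> nat)),
    forall p, A p -> fst p < N \/ exists f, In f fs /\ snd p = f (fst p).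

Definition katetov_le {X Y : Type} (J : (X -> Prop) -> Prop)
  (I : (Y -> Prop) -> Prop) : Prop :=
  exists f : Y -> X, forall A, J A -> I (fun y => A (f y)).

(* A strategy of Player II maps the finite sequence of
   Player I's moves (n_0, ..., n_k) (oldest first) to i_k (true = 1).
   (Player II's own previous moves are determined by the strategy.) *)
Definition strategyII := list nat -> bool.

Definition strictly_increasing (n : nat -> nat) : Prop :=
  forall k, n k < n (S k).

Definition reply (sigma : strategyII) (n : nat -> nat) (k : nat) : bool :=
  sigma (map n (seq 0 (S k))).

Definition II_wins_play (I : (nat -> Prop) -> Prop) (sigma : strategyII)
  (n : nat -> nat) : Prop :=
  let R := fun x => exists k, n k = x in
  let R1 := fun x => exists k, n k = x /\ reply sigma n k = true in
  I R \/ (~ I R /\ infinite_nat R1 /\ I R1).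

Definition II_winning_strategy (I : (nat -> Prop) -> Prop)
  (sigma : strategyII) : Prop :=
  forall n, strictly_increasing n -> II_wins_play I sigma n.

Definition II_has_winning_strategy (I : (nat -> Prop) -> Prop) : Prop :=
  exists sigma, II_winning_strategy I sigma.

(* Fix a Katetov map f : omega -> omega x omega witnessing ED <=_K I and
   colour each natural number x by the column fst (f x).  Player II answers
   1 exactly when the colour of Player I's current move has not occurred
   among the earlier moves.  Let R be the set of moves and R1 the set of
   moves answered by 1; when R is I-positive:
   - R1 is infinite: otherwise the colours of R1, which are all colours of
     R, are bounded, so R lies in the preimage of finitely many vertical
     lines, an ED-set, and R would belong to I;
   - R1 is in I: distinct moves of R1 have distinct columns, so the image of
     R1 under f is contained in the graph of a function, again an ED-set. *)

From Stdlib Require Import List Arith Lia Classical ClassicalEpsilon.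
Import ListNotations.

Definition first_occurrence (u : nat -> nat) (k : nat) : Prop :=
  forall j, j < k -> u j <> u k.

Lemma first_occurrence_exists (u : nat -> nat) (k : nat) :
  exists j, first_occurrence u j /\ u j = u k.
Proof.
  induction k as [k IH] using lt_wf_ind.
  destruct (classic (first_occurrence u k)) as [Hk | Hk].
  - now exists k.
  - apply not_all_ex_not in Hk as [j Hj].
    assert (j < k /\ u j = u k) as [Hjk Hu]
      by (split; apply NNPP; intro; apply Hj; tauto).
    destruct (IH j Hjk) as [i [Hi Hui]].
    exists i; split; [exact Hi | congruence].
Qed.

Lemma first_occurrence_unique (u : nat -> nat) (j k : nat) :
  first_occurrence u j -> first_occurrence u k -> u j = u k -> j = k.
Proof.
  intros Hj Hk E.
  destruct (lt_eq_lt_dec j k) as [[Hlt | Heq] | Hgt]; auto.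
  - now destruct (Hk j Hlt).
  - now destruct (Hj k Hgt).
Qed.

Definition fresh_colour_strategy (c : nat -> nat) : strategyII := fun l =>
  match rev l with
  | [] => false
  | x :: earlier => negb (existsb (fun y => c y =? c x) earlier)
  end.

Lemma reply_fresh_colour (c : nat -> nat) (n : nat -> nat) (k : nat) :
  reply (fresh_colour_strategy c) n k = true <->
  first_occurrence (fun i => c (n i)) k.
Proof.
  unfold reply, fresh_colour_strategy, first_occurrence.
  rewrite seq_S, map_app, rev_app_distr; cbn.
  rewrite Bool.negb_true_iff, <- Bool.not_true_iff_false, existsb_exists.
  split.
  - intros Hnew j Hj E; apply Hnew.
    exists (n j); split; [| now apply Nat.eqb_eq].
    apply -> in_rev; apply in_map, in_seq; lia.
  - intros Hfirst [y [Hy E]].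
    apply in_rev, in_map_iff in Hy as [j [<- Hj]].
    apply in_seq in Hj.
    apply (Hfirst j); [lia | now apply Nat.eqb_eq].
Qed.

Lemma finite_image_bounded (c : nat -> nat) (A : nat -> Prop) :
  finite_nat A -> exists M, forall x, A x -> c x < M.
Proof.
  intros [N HN].
  enough (exists M, forall x, x < N -> c x < M) as [M HM]
    by (exists M; auto).
  clear HN; induction N as [| N [M HM]].
  - exists 0; lia.
  - exists (max M (S (c N))); intros x Hx.
    destruct (Nat.eq_dec x N) as [-> | Hne]; [lia |].
    specialize (HM x ltac:(lia)); lia.
Qed.

Lemma functional_relation_graph (P : nat -> nat -> Prop) :
  (forall a b b', P a b -> P a b' -> b = b') ->
  exists g : nat -> nat, forall a b, P a b -> b = g a.
Proof.
  intros Hfun.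
  exists (fun a => epsilon (inhabits 0) (P a)).
  intros a b Hab; apply (Hfun a); [exact Hab |].
  apply epsilon_spec; now exists b.
Qed.

Lemma ED_vertical_strip (M : nat) : ED (fun p => fst p < M).
Proof. exists M, []; auto. Qed.

Lemma ED_graph (g : nat -> nat) : ED (fun p => snd p = g (fst p)).
Proof.
  exists 0, [g]; intros p Hp; right.
  exists g; split; [left |]; auto.
Qed.

Lemma katetov_pullback (I : (nat -> Prop) -> Prop) (f : nat -> nat * nat)
    (E : nat * nat -> Prop) (A : nat -> Prop) :
  (forall A B, I B -> (forall x, A x -> B x) -> I A) ->
  (forall E, ED E -> I (fun y => E (f y))) ->
  ED E -> (forall x, A x -> E (f x)) -> I A.
Proof. intros Hher Hf HE HA; exact (Hher _ _ (Hf E HE) HA). Qed.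

Section FreshColourPlay.

Variable I : (nat -> Prop) -> Prop.
Hypothesis I_hereditary : forall A B, I B -> (forall x, A x -> B x) -> I A.
Variable f : nat -> nat * nat.
Hypothesis f_katetov : forall E, ED E -> I (fun y => E (f y)).
Variable n : nat -> nat.

Let column (x : nat) : nat := fst (f x).
Let moves : nat -> Prop := fun x => exists k, n k = x.
Let fresh_moves : nat -> Prop := fun x =>
  exists k, n k = x /\ reply (fresh_colour_strategy column) n k = true.

(* If Player I's moves are I-positive, infinitely many of them are fresh:
   otherwise every move shares its column with one of finitely many moves. *)
Lemma fresh_moves_infinite : ~ I moves -> infinite_nat fresh_moves.
Proof.
  intros Hpos Hfin.
  destruct (finite_image_bounded column fresh_moves Hfin) as [M HM].
  apply Hpos, (katetov_pullback I f _ _ I_hereditary f_katetov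
                 (ED_vertical_strip M)).
  intros x [k <-].
  destruct (first_occurrence_exists (fun i => column (n i)) k) as [j [Hj E]].
  cbn in E; unfold column in *; rewrite <- E.
  apply (HM (n j)); exists j; split; [reflexivity |].
  now apply reply_fresh_colour.
Qed.

(* The fresh moves lie in I: f maps them into the graph of a function. *)
Lemma fresh_moves_in_ideal : I fresh_moves.
Proof.
  destruct (functional_relation_graph
              (fun a b => exists x, fresh_moves x /\ f x = (a, b)))
    as [g Hg].
  { intros a b b' [x [[k [<- Hk]] Ex]] [y [[l [<- Hl]] Ey]].
    apply reply_fresh_colour in Hk, Hl.
    assert (k = l) as ->.
    { apply (first_occurrence_unique _ _ _ Hk Hl); cbn.
      unfold column; now rewrite Ex, Ey. }
    congruence. }
  apply (katetov_pullback I f _ _ I_hereditary f_katetov (ED_graph g)).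
  intros x Hx; apply (Hg (fst (f x))).
  exists x; split; [exact Hx | now destruct (f x)].
Qed.

End FreshColourPlay.

Theorem mainTheorem16 (I : (nat -> Prop) -> Prop) :
  is_ideal I -> katetov_le ED I -> II_has_winning_strategy I.
Proof.
  intros [_ [Hher _]] [f Hf].
  exists (fresh_colour_strategy (fun x => fst (f x))).
  intros n _; unfold II_wins_play.
  destruct (classic (I (fun x => exists k, n k = x))) as [HR | HR].
  - now left.
  - right; split; [exact HR | split].
    + exact (fresh_moves_infinite I Hher f Hf n HR).
    + exact (fresh_moves_in_ideal I Hher f Hf n).
Qed.
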